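(* Let $H\in(0,1)$ with $H\neq1/2$, $T>0$, and let $X=S^H$ be a sub-fractional Brownian motion with index $H$. Then (a) $\displaystyle\lim_{h\to0+}\sup_{h\le t\le T-h}\Big|\frac{\mathbb{E}(X_{t+h}-2X_t+X_{t-h})^2}{h^{2H}}-(4-2^{2H})\Big|>0$; (b) for every $\varphi\in\Psi$, $\displaystyle\lim_{h\to0+}\sup_{\varphi(h)\le t\le T-h}\Big|\frac{\mathbb{E}(X_{t+h}-2X_t+X_{t-h})^2}{h^{2H}}-(4-2^{2H})\Big|=0$.
   Context: A sub-fractional Brownian motion with index $H\in(0,1)$ is a mean zero Gaussian process $(S^H_t)_{t\ge0}$ with covariance $G_H(s,t)=s^{2H}+t^{2H}-\tfrac12[(s+t)^{2H}+|s-t|^{2H}]$. $\Psi$ is the class of continuous $\varphi\colon(0,T]\to[0,\infty)$ with $\varphi(h)\to0$, $L(h):=\varphi(h)/h\to\infty$, $hL(h)^3\to0$ as $h\downarrow0$. *)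

From Stdlib Require Import Reals Lra.
Open Scope R_scope.

(* x^a for x >= 0, with the convention 0^a = 0 (a > 0); Rpower 0 a = 1 in Stdlib. *)
Definition pw (x a : R) : R := if Rle_dec x 0 then 0 else Rpower x a.

Definition G_H (H s t : R) : R :=
  pw s (2*H) + pw t (2*H) - / 2 * (pw (s + t) (2*H) + pw (Rabs (s - t)) (2*H)).

(* E (X_{t+h} - 2 X_t + X_{t-h})^2 for the centred Gaussian process X = S^H,
   expanded through the covariance G_H (bilinearity of expectation). *)
Definition second_moment (H t h : R) : R :=
  G_H H (t+h) (t+h) + 4 * G_H H t t + G_H H (t-h) (t-h)
  - 4 * G_H H (t+h) t - 4 * G_H H t (t-h) + 2 * G_H H (t+h) (t-h).

Definition dev (H t h : R) : R :=
  Rabs (second_moment H t h / pw h (2*H) - (4 - pw 2 (2*H))).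

Definition dev_set (H T : R) (a : R -> R) (h : R) : R -> Prop :=
  fun y => exists t, a h <= t /\ t <= T - h /\ y = dev H t h.

(* lim_{h -> 0+} sup (dev_set h) = L : for h small the supremum exists
   (least upper bound) and is within eps of L. *)
Definition sup_lim_right (E : R -> R -> Prop) (L : R) : Prop :=
  forall eps, eps > 0 -> exists delta, delta > 0 /\
    forall h, 0 < h < delta -> exists S, is_lub (E h) S /\ Rabs (S - L) < eps.

Definition in_Psi (T : R) (phi : R -> R) : Prop :=
  let D := fun h => 0 < h <= T in
  (forall x, D x -> limit1_in phi D (phi x) x) /\
  (forall h, D h -> 0 <= phi h) /\
  limit1_in phi D 0 0 /\
  (forall M, exists d, d > 0 /\ forall h, D h -> h < d -> phi h / h > M) /\
  limit1_in (fun h => h * (phi h / h) ^ 3) D 0 0.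

From Stdlib Require Import Reals Lra Classical.
Open Scope R_scope.

(** By self-similarity of the covariance, the normalised second moment minus
    [4 - 2^{2H}] equals [-1/2 Δ^4 x^{2H}] at [x = 2t/h - 2], where [Δ] is the
    unit forward difference.  Iterating the mean value theorem,
    [Δ^4 x^a = a(a-1)(a-2)(a-3) ξ^{a-4}] for some [ξ >= x]: this is nonzero
    when [a = 2H <> 1] and [O(1/x)] as [x -> oo].  For [h <= t <= T - h] the
    variable [x] sweeps [[0, 2T/h - 4]], so the supremum tends to
    [sup_{x >= 0} |Δ^4 x^a| / 2 > 0]; for [t >= φ(h)] with [φ(h)/h -> oo] it
    only sees [x >= 2φ(h)/h - 2 -> oo], so the supremum vanishes. *)

Fixpoint fdiff (k : nat) (f : R -> R) : R -> R :=
  match k with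
  | O => f
  | S k => fun y => fdiff k f (y + 1) - fdiff k f y
  end.

Lemma derivable_pt_lim_fdiff k f f' :
  (forall y, 0 < y -> derivable_pt_lim f y (f' y)) ->
  forall y, 0 < y -> derivable_pt_lim (fdiff k f) y (fdiff k f' y).
Proof.
  intros Hf; induction k as [|k IH]; intros y Hy; [exact (Hf y Hy)|].
  change (derivable_pt_lim (fun y => fdiff k f (y + 1) - fdiff k f y) y
    (fdiff k f' (y + 1) - fdiff k f' y)).
  replace (fdiff k f' (y + 1) - fdiff k f' y)
    with (fdiff k f' (y + 1) * 1 - fdiff k f' y) by ring.
  apply (derivable_pt_lim_minus (fun y => fdiff k f (y + 1)) (fdiff k f)).
  - apply (derivable_pt_lim_comp (fun y => y + 1) (fdiff k f)); [|apply IH; lra].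
    pose proof (derivable_pt_lim_plus id (fct_cte 1) y 1 0
      (derivable_pt_lim_id y) (derivable_pt_lim_const 1 y)) as Hd.
    rewrite Rplus_0_r in Hd; exact Hd.
  - exact (IH y Hy).
Qed.

Lemma fdiff_mvt (g : nat -> R -> R) :
  (forall n y, 0 < y -> derivable_pt_lim (g n) y (g (S n) y)) ->
  forall k y, 0 < y -> exists xi, y <= xi /\ fdiff k (g O) y = g k xi.
Proof.
  intros Hg k; revert g Hg; induction k as [|k IH]; intros g Hg y Hy.
  - exists y; split; [lra | reflexivity].
  - destruct (MVT_cor2 (fdiff k (g O)) (fdiff k (g 1%nat)) y (y + 1))
      as [c [Hc Hyc]]; [lra | |].
    { intros c Hc. apply derivable_pt_lim_fdiff; [apply Hg | lra]. }
    destruct (IH (fun n => g (S n)) (fun n => Hg (S n)) c) as [xi [Hxi E]]; [lra|].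
    exists xi; split; [lra|].
    change (fdiff k (g O) (y + 1) - fdiff k (g O) y = g (S k) xi).
    rewrite Hc, E; ring.
Qed.

Fixpoint falling (a : R) (n : nat) : R :=
  match n with
  | O => 1
  | S n => falling a n * (a - INR n)
  end.

Definition pow_deriv (a : R) (n : nat) (y : R) : R :=
  falling a n * Rpower y (a - INR n).

Lemma derivable_pt_lim_pow_deriv a n y : 0 < y ->
  derivable_pt_lim (pow_deriv a n) y (pow_deriv a (S n) y).
Proof.
  intros Hy. unfold pow_deriv. cbn [falling]. rewrite S_INR.
  replace (falling a n * (a - INR n) * Rpower y (a - (INR n + 1)))
    with (falling a n * ((a - INR n) * Rpower y (a - INR n - 1)))
    by (replace (a - (INR n + 1)) with (a - INR n - 1) by ring; ring).
  apply (derivable_pt_lim_scal (fun y => Rpower y (a - INR n))).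
  exact (derivable_pt_lim_power y (a - INR n) Hy).
Qed.

Lemma pw_pos x a : 0 < x -> pw x a = Rpower x a.
Proof. intros Hx; unfold pw; destruct (Rle_dec x 0); [lra | reflexivity]. Qed.

Lemma pw_0 a : pw 0 a = 0.
Proof. unfold pw; destruct (Rle_dec 0 0); [reflexivity | lra]. Qed.

Lemma pw_1 a : pw 1 a = 1.
Proof. rewrite pw_pos by lra. unfold Rpower. rewrite ln_1, Rmult_0_r. apply exp_0. Qed.

Lemma pw_ge0 x a : 0 <= pw x a.
Proof.
  unfold pw; destruct (Rle_dec x 0); [lra|].
  unfold Rpower; left; apply exp_pos.
Qed.

Lemma pw_mul h x a : 0 < h -> 0 <= x -> pw (h * x) a = pw h a * pw x a.
Proof.
  intros Hh [Hx | <-].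
  - rewrite !pw_pos by nra. symmetry; apply Rpower_mult_distr; assumption.
  - rewrite Rmult_0_r, !pw_0; ring.
Qed.

Lemma pw_le a x y : 0 <= a -> 0 <= x <= y -> pw x a <= pw y a.
Proof.
  intros Ha [[Hx | <-] Hxy].
  - rewrite !pw_pos by lra. apply Rle_Rpower_l; lra.
  - rewrite pw_0; apply pw_ge0.
Qed.

Definition diff4 (f : R -> R) (y : R) : R :=
  f (y + 4) - 4 * f (y + 3) + 6 * f (y + 2) - 4 * f (y + 1) + f y.

Lemma fdiff4E f y : fdiff 4 f y = diff4 f y.
Proof.
  unfold diff4; cbn [fdiff].
  replace (y + 1 + 1 + 1 + 1) with (y + 4) by ring.
  replace (y + 1 + 1 + 1) with (y + 3) by ring.
  replace (y + 1 + 1) with (y + 2) by ring.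
  ring.
Qed.

Lemma diff4_pw_mvt a y : 0 < y ->
  exists xi, y <= xi /\ diff4 (fun z => pw z a) y = falling a 4 * Rpower xi (a - 4).
Proof.
  intros Hy.
  destruct (fdiff_mvt (pow_deriv a) (derivable_pt_lim_pow_deriv a) 4 y Hy)
    as [xi [Hxi E]].
  exists xi; split; [exact Hxi|].
  replace (a - 4) with (a - INR 4) by (cbn; ring).
  change (falling a 4 * Rpower xi (a - INR 4)) with (pow_deriv a 4 xi).
  rewrite <- E, fdiff4E. unfold diff4, pow_deriv; cbn [falling INR].
  rewrite !pw_pos by lra. rewrite Rminus_0_r, !Rmult_1_l. reflexivity.
Qed.

Lemma diff4_pw_decay a y : a < 3 -> 1 <= y ->
  Rabs (diff4 (fun z => pw z a) y) <= Rabs (falling a 4) / y.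
Proof.
  intros Ha Hy.
  destruct (diff4_pw_mvt a y) as [xi [Hxi ->]]; [lra|].
  rewrite Rabs_mult, (Rabs_pos_eq (Rpower _ _)) by (unfold Rpower; left; apply exp_pos).
  apply Rmult_le_compat_l; [apply Rabs_pos|].
  apply Rle_trans with (Rpower xi (Ropp 1)); [apply Rle_Rpower; lra|].
  rewrite Rpower_Ropp, Rpower_1 by lra.
  apply Rinv_le_contravar; lra.
Qed.

Definition dev_profile (a y : R) : R := / 2 * Rabs (diff4 (fun z => pw z a) y).

Lemma dev_profile_ge0 a y : 0 <= dev_profile a y.
Proof. unfold dev_profile; pose proof (Rabs_pos (diff4 (fun z => pw z a) y)); lra. Qed.

Section Profile.

Variable a : R.
Hypothesis Ha : 0 < a < 2.

Lemma dev_profile_1_pos : a <> 1 -> 0 < dev_profile a 1.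
Proof.
  intros Ha1. unfold dev_profile.
  apply Rmult_lt_0_compat; [lra|]. apply Rabs_pos_lt.
  destruct (diff4_pw_mvt a 1) as [xi [_ ->]]; [lra|].
  apply Rmult_integral_contrapositive_currified.
  - cbn [falling INR].
    repeat apply Rmult_integral_contrapositive_currified; lra.
  - unfold Rpower; apply Rgt_not_eq, exp_pos.
Qed.

Lemma dev_profile_bounded : exists M, forall y, 0 <= y -> dev_profile a y <= M.
Proof.
  exists (/ 2 * (Rabs (falling a 4) + 16 * pw 5 a)). intros y Hy.
  unfold dev_profile; apply Rmult_le_compat_l; [lra|].
  assert (Hf := Rabs_pos (falling a 4)).
  destruct (Rle_lt_dec 1 y) as [H1 | H1].
  - apply Rle_trans with (Rabs (falling a 4) / y); [apply diff4_pw_decay; lra|].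
    assert (P5 := pw_ge0 5 a).
    assert (Rabs (falling a 4) / y <= Rabs (falling a 4)); [|lra].
    unfold Rdiv; rewrite <- (Rmult_1_r (Rabs (falling a 4))) at 2.
    apply Rmult_le_compat_l; [exact Hf|].
    rewrite <- Rinv_1; apply Rinv_le_contravar; lra.
  - (* below 1 every point of the stencil lies in [0, 5] *)
    assert (A4 := pw_le a (y + 4) 5). assert (A3 := pw_le a (y + 3) 5).
    assert (A2 := pw_le a (y + 2) 5). assert (A1 := pw_le a (y + 1) 5).
    assert (A0 := pw_le a y 5).
    assert (B4 := pw_ge0 (y + 4) a). assert (B3 := pw_ge0 (y + 3) a).
    assert (B2 := pw_ge0 (y + 2) a). assert (B1 := pw_ge0 (y + 1) a).
    assert (B0 := pw_ge0 y a).
    unfold diff4; apply Rabs_le; split; lra.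
Qed.

Lemma dev_profile_vanishing eps : 0 < eps ->
  exists Y, 1 <= Y /\ forall y, Y <= y -> dev_profile a y <= eps.
Proof.
  intros Heps.
  assert (Hf := Rabs_pos (falling a 4)).
  exists (Rabs (falling a 4) / eps + 1).
  assert (0 <= Rabs (falling a 4) / eps)
    by (apply Rmult_le_pos; [lra | left; apply Rinv_0_lt_compat; lra]).
  split; [lra|]. intros y Hy.
  assert (D := diff4_pw_decay a y ltac:(lra) ltac:(lra)).
  assert (Rabs (falling a 4) / y <= eps); [|unfold dev_profile; lra].
  apply (Rmult_le_reg_r y); [lra|].
  unfold Rdiv; rewrite Rmult_assoc, Rinv_l, Rmult_1_r by lra.
  replace (Rabs (falling a 4)) with (Rabs (falling a 4) / eps * eps) at 1
    by (field; lra).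
  nra.
Qed.

End Profile.

Lemma G_H_scale H h s t : 0 < h -> 0 <= s -> 0 <= t ->
  G_H H (h * s) (h * t) = pw h (2 * H) * G_H H s t.
Proof.
  intros Hh Hs Ht. unfold G_H.
  replace (h * s + h * t) with (h * (s + t)) by ring.
  replace (Rabs (h * s - h * t)) with (h * Rabs (s - t))
    by (replace (h * s - h * t) with (h * (s - t)) by ring;
        rewrite Rabs_mult, (Rabs_pos_eq h); lra).
  assert (0 <= Rabs (s - t)) by apply Rabs_pos.
  rewrite !(pw_mul h) by lra. ring.
Qed.

Lemma second_moment_scale H t h : 0 < h -> h <= t ->
  second_moment H t h = pw h (2 * H) * second_moment H (t / h) 1.
Proof.
  intros Hh Ht.
  assert (Hv : 1 <= t / h)
    by (apply (Rmult_le_reg_r h); [exact Hh | unfold Rdiv; rewrite Rmult_assoc, Rinv_l; lra]).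
  unfold second_moment. set (v := t / h) in *.
  replace t with (h * v) by (unfold v; field; lra).
  replace (h * v + h) with (h * (v + 1)) by ring.
  replace (h * v - h) with (h * (v - 1)) by ring.
  rewrite !G_H_scale by lra. ring.
Qed.

Lemma second_moment_unit H v : 1 <= v ->
  second_moment H v 1 = (4 - pw 2 (2 * H)) - / 2 * diff4 (fun z => pw z (2 * H)) (2 * v - 2).
Proof.
  intros Hv. unfold second_moment, G_H, diff4.
  rewrite !Rminus_diag, Rabs_R0.
  replace (Rabs (v + 1 - v)) with 1 by (rewrite Rabs_pos_eq; lra).
  replace (Rabs (v - (v - 1))) with 1 by (rewrite Rabs_pos_eq; lra).
  replace (Rabs (v + 1 - (v - 1))) with 2 by (rewrite Rabs_pos_eq; lra).
  replace (v + 1 + (v + 1)) with (2 * v - 2 + 4) by ring.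
  replace (v + 1 + v) with (2 * v - 2 + 3) by ring.
  replace (v + v) with (2 * v - 2 + 2) by ring.
  replace (v + (v - 1)) with (2 * v - 2 + 1) by ring.
  replace (v - 1 + (v - 1)) with (2 * v - 2) by ring.
  replace (v + 1 + (v - 1)) with (2 * v - 2 + 2) by ring.
  rewrite pw_0, pw_1. lra.
Qed.

Lemma dev_scale H t h : 0 < h -> h <= t ->
  dev H t h = dev_profile (2 * H) (2 * (t / h) - 2).
Proof.
  intros Hh Ht.
  assert (Hv : 1 <= t / h)
    by (apply (Rmult_le_reg_r h); [exact Hh | unfold Rdiv; rewrite Rmult_assoc, Rinv_l; lra]).
  assert (Hp : 0 < pw h (2 * H)) by (rewrite pw_pos by lra; apply exp_pos).
  unfold dev, dev_profile.
  rewrite second_moment_scale, second_moment_unit by lra.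
  set (D := diff4 (fun z => pw z (2 * H)) (2 * (t / h) - 2)).
  replace (pw h (2 * H) * (4 - pw 2 (2 * H) - / 2 * D) / pw h (2 * H)
    - (4 - pw 2 (2 * H))) with (- (/ 2 * D)) by (field; lra).
  rewrite Rabs_Ropp, Rabs_mult, Rabs_pos_eq; lra.
Qed.

Lemma dev_set_profile H T (lo : R -> R) h z : 0 < h -> h <= lo h ->
  dev_set H T lo h z -> exists y, 2 * (lo h / h) - 2 <= y /\ z = dev_profile (2 * H) y.
Proof.
  intros Hh Hlo [t [Ht [_ ->]]].
  exists (2 * (t / h) - 2); split; [|apply dev_scale; lra].
  assert (lo h / h <= t / h); [|lra].
  apply Rmult_le_compat_r; [left; apply Rinv_0_lt_compat|]; lra.
Qed.

Lemma sup_lim_right_intro (E : R -> R -> Prop) L :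
  (forall eps, 0 < eps -> exists delta, 0 < delta /\ forall h, 0 < h < delta ->
     (exists z, E h z /\ L - eps < z) /\ (forall z, E h z -> z <= L + eps)) ->
  sup_lim_right E L.
Proof.
  intros HE eps Heps.
  destruct (HE (eps / 2)) as [delta [Hd Hdelta]]; [lra|].
  exists delta; split; [exact Hd|]. intros h Hh.
  destruct (Hdelta h Hh) as [[z [Ez Hz]] Hub].
  destruct (completeness (E h)) as [S HS];
    [exists (L + eps / 2); exact Hub | exists z; exact Ez |].
  exists S; split; [exact HS|].
  assert (z <= S) by (apply HS; exact Ez).
  assert (S <= L + eps / 2) by (apply HS; exact Hub).
  apply Rabs_def1; lra.
Qed.

Lemma is_lub_approx (E : R -> Prop) L eps : is_lub E L -> 0 < eps ->
  exists z, E z /\ L - eps < z.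
Proof.
  intros [_ HL] Heps. apply NNPP; intros Hn.
  assert (L <= L - eps); [|lra].
  apply HL; intros z Ez. apply Rnot_lt_le; intros Hz. apply Hn. exists z; auto.
Qed.

Lemma dev_sup_lim_diagonal H T : 0 < H < 1 -> H <> / 2 -> 0 < T ->
  exists L, L > 0 /\ sup_lim_right (dev_set H T (fun h => h)) L.
Proof.
  intros HH Hhalf HT.
  assert (Ha : 0 < 2 * H < 2) by lra.
  assert (Ha1 : 2 * H <> 1) by (intro; apply Hhalf; lra).
  set (P := fun z => exists y, 0 <= y /\ z = dev_profile (2 * H) y).
  destruct (completeness P) as [L HL].
  { destruct (dev_profile_bounded _ Ha) as [M HM].
    exists M; intros z [y [Hy ->]]; auto. }
  { exists (dev_profile (2 * H) 0), 0; split; [lra | reflexivity]. }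
  assert (dev_profile (2 * H) 1 <= L)
    by (apply HL; exists 1; split; [lra | reflexivity]).
  exists L; split; [pose proof (dev_profile_1_pos _ Ha Ha1); lra|].
  apply sup_lim_right_intro; intros eps Heps.
  destruct (is_lub_approx P L eps HL Heps) as [z1 [[y1 [Hy1 ->]] Hz1]].
  exists (2 * T / (y1 + 4)); split; [apply Rdiv_lt_0_compat; lra|].
  intros h [Hh Hhd].
  assert (h * (y1 + 4) < 2 * T).
  { apply (Rmult_lt_compat_r (y1 + 4)) in Hhd; [|lra].
    unfold Rdiv in Hhd; rewrite Rmult_assoc, Rinv_l in Hhd; lra. }
  split.
  - (* [t = h (y1 + 2) / 2] is the point where the rescaled variable equals [y1] *)
    exists (dev H (h * (y1 + 2) / 2) h); split.
    + exists (h * (y1 + 2) / 2); repeat split; nra.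
    + rewrite dev_scale by nra.
      replace (2 * (h * (y1 + 2) / 2 / h) - 2) with y1 by (field; lra). exact Hz1.
  - intros z Ez.
    destruct (dev_set_profile H T (fun h => h) h z Hh (Rle_refl h) Ez) as [y [Hy ->]].
    replace (2 * (h / h) - 2) with 0 in Hy by (field; lra).
    assert (dev_profile (2 * H) y <= L) by (apply HL; exists y; auto).
    lra.
Qed.

Lemma dev_sup_lim_Psi H T phi : 0 < H < 1 -> 0 < T -> in_Psi T phi ->
  sup_lim_right (dev_set H T phi) 0.
Proof.
  intros HH HT [_ [_ [Phi0 [PhiL _]]]].
  apply sup_lim_right_intro; intros eps Heps.
  destruct (dev_profile_vanishing (2 * H) ltac:(lra) eps Heps) as [Y [HY1 HY]].
  destruct (PhiL (Y / 2 + 1)) as [d [Hd Hd']].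
  destruct (Phi0 (T / 2)) as [al [Hal Hal']]; [lra|].
  exists (Rmin d (Rmin al (T / 2))); split; [repeat apply Rmin_pos; lra|].
  intros h [Hh Hhd].
  assert (Hmin := Rmin_l d (Rmin al (T / 2))).
  assert (Hmin' := Rmin_r d (Rmin al (T / 2))).
  assert (Hal1 := Rmin_l al (T / 2)). assert (Hal2 := Rmin_r al (T / 2)).
  assert (Hratio : phi h / h > Y / 2 + 1) by (apply Hd'; lra).
  assert (Hsmall : Rabs (phi h - 0) < T / 2).
  { apply Hal'; split; [lra|].
    unfold dist; cbn; unfold R_dist. rewrite Rminus_0_r, Rabs_pos_eq; lra. }
  rewrite Rminus_0_r in Hsmall. apply Rabs_def2 in Hsmall.
  assert (Hlo : h <= phi h).
  { apply (Rmult_le_reg_r (/ h)); [apply Rinv_0_lt_compat; lra|].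
    rewrite Rinv_r by lra. fold (phi h / h). lra. }
  split.
  - exists (dev H (phi h) h); split.
    + exists (phi h); repeat split; lra.
    + pose proof (dev_profile_ge0 (2 * H) (2 * (phi h / h) - 2)).
      rewrite dev_scale by lra. lra.
  - intros z Ez.
    destruct (dev_set_profile H T phi h z Hh Hlo Ez) as [y [Hy ->]].
    assert (dev_profile (2 * H) y <= eps) by (apply HY; lra).
    lra.
Qed.

Theorem mainTheorem12 (H T : R) (HH : 0 < H < 1) (Hhalf : H <> / 2) (HT : 0 < T) :
  (exists L, L > 0 /\ sup_lim_right (dev_set H T (fun h => h)) L) /\
  (forall phi, in_Psi T phi -> sup_lim_right (dev_set H T phi) 0).
Proof.
  split.
  - exact (dev_sup_lim_diagonal H T HH Hhalf HT).
  - intros phi Hphi. exact (dev_sup_lim_Psi H T phi HH HT Hphi).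
Qed.
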